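(* Let $d\ge1$ and let $G$ and $H$ be ordered graphs, each with $m$ edges, such that $M^{\mathbb E}_{d,G}=M^{\mathbb E}_{d,H}$. Then the edge bijection sending the $k$-th edge of $G$ to the $k$-th edge of $H$ is a cycle isomorphism.
   Context: An ordered graph is a finite vertex set with a sequence $(E_1,\dots,E_m)$ of distinct unordered pairs of distinct vertices. For a real configuration $\mathbf p$ in $\mathbb R^d$, $m^{\mathbb E}_G(\mathbf p)\in\mathbb R^m$ has $k$-th coordinate $\|\mathbf p_i-\mathbf p_j\|^2$ with $E_k=\{i,j\}$; $M^{\mathbb E}_{d,G}$ is the image of $m^{\mathbb E}_G$ over all real configurations in $\mathbb R^d$. A set of edges is cycle supported if its edges, in some order, form a simple cycle. An edge bijection between two graphs is a cycle isomorphism if a set of edges is cycle supported exactly when its image is cycle supported. *)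

From Stdlib Require Import Reals.
From mathcomp Require Import all_boot.
Set Implicit Arguments. Unset Strict Implicit. Unset Printing Implicit Defensive.

Definition same_edge (V : eqType) (e f : V * V) : bool :=
  ((e.1 == f.1) && (e.2 == f.2)) || ((e.1 == f.2) && (e.2 == f.1)).

Definition ordered_graph (V : finType) (m : nat) (E : m.-tuple (V * V)) : Prop :=
  (forall k : 'I_m, (tnth E k).1 != (tnth E k).2) /\
  (forall k l : 'I_m, same_edge (tnth E k) (tnth E l) -> k = l).

Definition sqdist (d : nat) (x y : 'I_d -> R) : R :=
  foldr (fun i acc => Rplus (Rmult (Rminus (x i) (y i)) (Rminus (x i) (y i))) acc)
        R0 (enum 'I_d).

Definition measurement (d : nat) (V : finType) (m : nat) (E : m.-tuple (V * V))
  (p : V -> 'I_d -> R) : 'I_m -> R :=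
  fun k => sqdist (p (tnth E k).1) (p (tnth E k).2).

Definition in_measurement_variety (d : nat) (V : finType) (m : nat)
  (E : m.-tuple (V * V)) (x : 'I_m -> R) : Prop :=
  exists p : V -> 'I_d -> R, measurement E p = x.

Definition cycle_supported (V : finType) (m : nat) (E : m.-tuple (V * V))
  (S : {set 'I_m}) : Prop :=
  exists c : seq V,
    [/\ 3 <= size c, uniq c,
        (forall k : 'I_m, k \in S ->
            has (same_edge (tnth E k)) (zip c (rot 1 c)))
      & (forall pr, pr \in zip c (rot 1 c) ->
            exists2 k : 'I_m, k \in S & same_edge (tnth E k) pr)].

Definition index_cycle_isomorphism (V W : finType) (m : nat)
  (E : m.-tuple (V * V)) (F : m.-tuple (W * W)) : Prop :=
  forall S : {set 'I_m}, cycle_supported E S <-> cycle_supported F S.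

From Stdlib Require Import Reals Lra FunctionalExtensionality.
From mathcomp Require Import all_boot.
Set Implicit Arguments. Unset Strict Implicit. Unset Printing Implicit Defensive.

(* The k-th coordinate of m^E_G(p) vanishes iff p identifies the two ends of
   E_k, so the zero patterns of points of M^E_{d,G} only see which edges a
   configuration collapses. A cycle-supported set S is exactly a circuit of
   these zero patterns: collapsing all edges of a cycle but one collapses the
   last one too, while for k != k' in S the two-valued configuration that cuts
   the path S \ {k'} at k collapses every edge of S except k and k'.
   Conversely, if S is such a circuit, colouring vertices by reachability in
   S \ {k} shows that the ends of E_k are joined inside S \ {k}; a shortest
   such path closes up with E_k into a simple cycle, which must use all of S.
   The description refers only to the set M^E_{d,G}, whence the theorem. *)

Section ZipRot.
Variables (A B : Type).

Lemma zip_take n (s : seq A) (t : seq B) : zip (take n s) (take n t) = take n (zip s t).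
Proof. by elim: n s t => [|n IH] [|a s] [|b t] //=; rewrite ?IH //; case: take. Qed.

Lemma zip_drop n (s : seq A) (t : seq B) : zip (drop n s) (drop n t) = drop n (zip s t).
Proof. by elim: n s t => [|n IH] [|a s] [|b t] //=; case: drop. Qed.

Lemma zip_rot n (s : seq A) (t : seq B) :
  size s = size t -> zip (rot n s) (rot n t) = rot n (zip s t).
Proof. by move=> eq_st; rewrite /rot zip_cat ?size_drop ?eq_st // zip_drop zip_take. Qed.

End ZipRot.

Section CycleEdges.
Variable V : eqType.
Implicit Types (x y a b : V) (s c P : seq V).

Definition path_edges s := zip s (behead s).

Definition cycle_edges c := zip c (rot 1 c).

Lemma mem_path_edges s a b : (a, b) \in path_edges s -> (a \in s) && (b \in s).
Proof.
case: s => [|x s] //=; elim: s x => [|y s IH] x //=.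
rewrite inE => /orP[/eqP[-> ->] | /IH /andP[ha hb]]; first by rewrite !inE !eqxx orbT.
by rewrite ha orbT in_cons hb orbT.
Qed.

Lemma cycle_edges_cons x P :
  cycle_edges (x :: P) = rcons (path_edges (x :: P)) (last x P, x).
Proof.
rewrite /cycle_edges /path_edges rot1_cons /=.
by elim: P {1 3 4}x => //= y P IH z; rewrite IH.
Qed.

Lemma cycle_edges_rot n c : cycle_edges (rot n c) = rot n (cycle_edges c).
Proof. by rewrite /cycle_edges rot_rot zip_rot ?size_rot. Qed.

Lemma cycle_edges_rot_closing c pr : pr \in cycle_edges c ->
  exists x P, [/\ uniq (x :: P) = uniq c, size (x :: P) = size c,
    cycle_edges (x :: P) =i cycle_edges c & pr = (last x P, x)].
Proof.
case/rot_to => i rest eq_rot.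
have eq_edges : cycle_edges (rot 1 (rot i c)) = rcons rest pr.
  by rewrite !cycle_edges_rot eq_rot rot1_cons.
case def_c: (rot 1 (rot i c)) eq_edges => [|x P].
  by move/(congr1 size); rewrite size_rcons.
rewrite cycle_edges_cons => /rcons_inj[_ <-].
exists x, P; rewrite -def_c !rot_uniq !size_rot; split => // q.
by rewrite !cycle_edges_rot !mem_rot.
Qed.

Lemma path_edges_index s a b :
  uniq s -> (a, b) \in path_edges s -> index b s = (index a s).+1.
Proof.
case: s => [|x s] //; elim: s x => [|y s IH] x // /andP[xNys uys].
have x_neq v : v \in y :: s -> (x == v) = false.
  by move=> hv; apply: contraNF xNys => /eqP ->.
rewrite /path_edges /= inE => /orP[/eqP[-> ->] | ab_s].
  by rewrite eqxx x_neq ?mem_head //= eqxx.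
have /andP[ha hb] := mem_path_edges ab_s.
by rewrite /= !x_neq // -(IH y uys ab_s).
Qed.

Lemma path_edges_const (X : Type) (f : V -> X) x P :
  (forall a b, (a, b) \in path_edges (x :: P) -> f a = f b) -> f x = f (last x P).
Proof.
elim: P x => [|y P IH] x //= fP.
rewrite (fP x y) ?mem_head // IH // => a b ab.
by apply: fP; rewrite /path_edges /= inE ab orbT.
Qed.

Lemma path_edges_rel (e : rel V) x P a b :
  path e x P -> (a, b) \in path_edges (x :: P) -> e a b.
Proof.
elim: P x => [|y P IH] x //= /andP[exy pP].
by rewrite inE => /orP[/eqP[-> ->] // | /(IH _ pP)].
Qed.

Lemma closing_edge_notin_path x P a b : uniq (x :: P) -> 2 <= size P ->
  (a, b) \in path_edges (x :: P) -> ~~ same_edge (last x P, x) (a, b).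
Proof.
move=> uxP szP ab; have ind_ab := path_edges_index uxP ab.
have ind_last : index (last x P) (x :: P) = size P.
  by rewrite (last_nth x) -[size P]/(size (x :: P)).-1 index_uniq.
rewrite /same_edge /=; apply/negP => /orP[] /andP[/eqP ea /eqP eb].
  by move: ind_ab; rewrite -eb /= eqxx.
by move: ind_ab szP; rewrite -ea -eb ind_last /= eqxx => ->.
Qed.

End CycleEdges.

Section SameEdge.
Variable V : eqType.
Implicit Types e f g : V * V.

Lemma same_edge_swap e : same_edge e (e.2, e.1).
Proof. by rewrite /same_edge !eqxx orbT. Qed.

Lemma same_edge_sym e f : same_edge e f -> same_edge f e.
Proof.
by case: e f => [a b] [c d]; rewrite /same_edge /= => /orP[] /andP[/eqP-> /eqP->];
  rewrite !eqxx ?orbT.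
Qed.

Lemma same_edge_trans e f g : same_edge e f -> same_edge f g -> same_edge e g.
Proof.
case: e f g => [a b] [c d] [x y]; rewrite /same_edge /=.
by do 2![case/orP => /andP[/eqP-> /eqP->]]; rewrite !eqxx ?orbT.
Qed.

Lemma same_edge_ends (X : Type) (h : V -> X) e f :
  same_edge e f -> h e.1 = h e.2 <-> h f.1 = h f.2.
Proof.
by case: e f => [a b] [c d]; rewrite /same_edge /= => /orP[] /andP[/eqP-> /eqP->];
  split=> ->.
Qed.

End SameEdge.

Local Open Scope R_scope.

Lemma sum_squares_eq0 (I : eqType) (f : I -> R) (l : seq I) :
  foldr (fun i acc => f i * f i + acc) 0 l = 0 -> {in l, forall i, f i = 0}.
Proof.
have sum_ge0 l' : 0 <= foldr (fun i acc => f i * f i + acc) 0 l'.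
  elim: l' => [|i l' IH] /=; first exact: Rle_refl.
  by have := Rle_0_sqr (f i); rewrite /Rsqr; lra.
elim: l => [|j l IH] //= sum0 i; rewrite inE.
have [/Rsqr_0_uniq fj0 rest0] := Rplus_eq_R0 _ _ (Rle_0_sqr (f j)) (sum_ge0 l) sum0.
by case/orP => [/eqP -> | /(IH rest0)].
Qed.

Lemma sqdist_eq0 (d : nat) (x y : 'I_d -> R) : sqdist x y = 0 <-> x = y.
Proof.
split=> [sq0 | ->]; last by rewrite /sqdist; elim: (enum _) => //= i l ->; ring.
apply: functional_extensionality => i; apply: Rminus_diag_uniq.
by apply: (sum_squares_eq0 (f := fun i => x i - y i) sq0); rewrite mem_enum.
Qed.

Local Close Scope R_scope.

Section CycleSupported.
Variables (V : finType) (m : nat) (E : m.-tuple (V * V)).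
Local Notation edge k := (tnth E k).
Implicit Types (S : {set 'I_m}) (k : 'I_m) (c : seq V).

Lemma cycle_supported_closing S k : cycle_supported E S -> k \in S ->
  exists x P, [/\ uniq (x :: P), 2 <= size P, same_edge (edge k) (last x P, x),
    forall pr, pr \in path_edges (x :: P) -> exists2 j, j \in S & same_edge (edge j) pr
  & forall j, j \in S -> same_edge (edge j) (last x P, x) \/
                exists2 pr, pr \in path_edges (x :: P) & same_edge (edge j) pr].
Proof.
case=> c [c_ge3 uc on_c cover] kS.
have /hasP[pr pr_c sek] := on_c k kS.
have [x [P [uxP sxP eq_edges def_pr]]] := cycle_edges_rot_closing pr_c.
have on_cycle q : (q \in cycle_edges c) = (q \in path_edges (x :: P)) || (q == (last x P, x)).
  by rewrite -eq_edges cycle_edges_cons mem_rcons inE orbC.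
exists x, P; split; rewrite -?def_pr ?uxP //; first by move: c_ge3; rewrite -sxP.
  by move=> q q_P; apply: cover; rewrite on_cycle q_P.
move=> j /on_c/hasP[q]; rewrite on_cycle => /orP[q_P sej | /eqP-> sej].
  by right; exists q.
by left; rewrite def_pr.
Qed.

Lemma cycle_supported_const (X : Type) (h : V -> X) S k :
  cycle_supported E S -> k \in S ->
  (forall j, j \in S -> j != k -> h (edge j).1 = h (edge j).2) ->
  h (edge k).1 = h (edge k).2.
Proof.
move=> cS kS h_other.
have [x [P [uxP sxP sek cover _]]] := cycle_supported_closing cS kS.
apply/(same_edge_ends h sek); symmetry; apply: path_edges_const => a b ab.
have [j jS sej] := cover _ ab.
have jNk : j != k.
  apply: contraNneq (closing_edge_notin_path uxP sxP ab) => ejk.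
  by rewrite ejk in sej; apply: same_edge_trans (same_edge_sym sek) sej.
exact: (same_edge_ends h sej).1 (h_other j jS jNk).
Qed.

Lemma cycle_supported_free S k k' : ordered_graph E -> cycle_supported E S ->
  k \in S -> k' \in S -> k != k' ->
  exists b : V -> bool,
    (forall j, j \in S -> j != k -> j != k' -> b (edge j).1 = b (edge j).2) /\
    b (edge k).1 != b (edge k).2.
Proof.
move=> [_ edge_inj] cS kS k'S kNk'.
have [x [P [uxP _ sek' _ on_cycle]]] := cycle_supported_closing cS k'S.
have on_path j : j \in S -> j != k' ->
    exists2 pr, pr \in path_edges (x :: P) & same_edge (edge j) pr.
  move=> jS jNk'; case: (on_cycle j jS) => // sej.
  by case/eqP: jNk'; apply: edge_inj; apply: same_edge_trans sej (same_edge_sym sek').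
move: (x :: P) uxP on_path {on_cycle sek'} => s us on_path.
(* Colour the path [s] by its position relative to the edge [(a, a')] of [k]:
   only [k] and the closing edge [k'] join the two colour classes. *)
have [[a a'] aa' sek] := on_path k kS kNk'.
have ind_a' := path_edges_index us aa'.
pose b v := index v s <= index a s.
exists b; split; last first.
  apply/negP => /eqP /(same_edge_ends b sek).
  by rewrite /b /= ind_a' leqnn ltnn.
move=> j jS jNk jNk'; have [[c c'] cc' sej] := on_path j jS jNk'.
have ind_c' := path_edges_index us cc'.
apply/(same_edge_ends b sej); rewrite /b /= ind_c'.
have [eq_ind | neq_ind] := eqVneq (index c s) (index a s).
  have /andP[c_in c'_in] := mem_path_edges cc'.
  have /andP[a_in a'_in] := mem_path_edges aa'.
  have ec : c = a := index_inj c c_in a_in eq_ind.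
  have ec' : c' = a' by apply: (index_inj c c'_in a'_in); rewrite ind_c' ind_a' eq_ind.
  case/eqP: jNk; apply: edge_inj; rewrite ec ec' in sej.
  exact: same_edge_trans sej (same_edge_sym sek).
by rewrite ltn_neqAle neq_ind.
Qed.

Lemma cycle_supported_cover S c : 3 <= size c -> uniq c ->
  (forall pr, pr \in cycle_edges c -> exists2 j, j \in S & same_edge (edge j) pr) ->
  cycle_supported E [set j in S | has (same_edge (edge j)) (cycle_edges c)].
Proof.
move=> c_ge3 uc cover; exists c; split => // [k | pr pr_c].
  by rewrite inE => /andP[].
have [j jS sej] := cover pr pr_c; exists j => //.
by rewrite inE jS; apply/hasP; exists pr.
Qed.

Lemma forced_edge_on_cycle S k : ordered_graph E -> k \in S ->
  (forall b : V -> bool,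
     (forall j, j \in S -> j != k -> b (edge j).1 = b (edge j).2) ->
     b (edge k).1 = b (edge k).2) ->
  exists2 T : {set 'I_m}, T \subset S & k \in T /\ cycle_supported E T.
Proof.
move=> [loopfree edge_inj] kS forced.
pose other u v := [exists j, [&& j \in S, j != k & same_edge (edge j) (u, v)]].
have other_sym : symmetric other.
  move=> u v; apply/existsP/existsP => -[j /and3P[jS jNk sej]]; exists j;
    by rewrite jS jNk; apply: same_edge_trans sej (same_edge_swap _).
case def_k: (edge k) => [u v].
have conn : connect other u v.
  have ends_eq : connect other u (edge k).1 = connect other u (edge k).2.
    apply: forced => j jS jNk.
    apply: (same_connect1r (sym_connect_sym other_sym)).
    by apply/existsP; exists j; rewrite jS jNk /same_edge !eqxx.
  by move: ends_eq; rewrite def_k /= connect0 => <-.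
have [q [pq uq lq]] : exists q, [/\ path other u q, uniq (u :: q) & last u q = v].
  by case/connectP: conn => q0 pq0 ->; case: (shortenP pq0) => q pq uq _; exists q.
have q_ge2 : 2 <= size q.
  case: q pq uq lq => [_ _ /= uv | w [|w' q'] //].
    by move: (loopfree k); rewrite def_k /= uv eqxx.
  rewrite /= andbT => /existsP[j /and3P[_ jNk sej]] _ wv.
  by case/eqP: jNk; apply: edge_inj; rewrite def_k -wv.
have cover pr : pr \in cycle_edges (u :: q) -> exists2 j, j \in S & same_edge (edge j) pr.
  rewrite cycle_edges_cons mem_rcons inE lq => /orP[/eqP-> | pr_q].
    by exists k; rewrite // def_k; apply: (same_edge_swap (u, v)).
  case: pr pr_q => a b /(path_edges_rel pq)/existsP[j /and3P[jS _ sej]].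
  by exists j.
exists [set j in S | has (same_edge (edge j)) (cycle_edges (u :: q))].
  by apply/subsetP => j; rewrite inE => /andP[].
split; last exact: cycle_supported_cover.
rewrite inE kS /=; apply/hasP; exists (v, u).
  by rewrite cycle_edges_cons mem_rcons lq mem_head.
by rewrite def_k; apply: (same_edge_swap (u, v)).
Qed.

End CycleSupported.

(* The circuits of the matroid of zero patterns of [M]: every element of [S]
   is forced to vanish by the others, while removing any element of [S]
   frees all the remaining ones. *)
Definition zero_circuit (m : nat) (M : ('I_m -> R) -> Prop) (S : {set 'I_m}) : Prop :=
  [/\ S != set0,
      forall k y, k \in S -> M y ->
        (forall j, j \in S -> j != k -> y j = R0) -> y k = R0
    & forall k k', k \in S -> k' \in S -> k != k' ->
        exists2 y, M y &
          (forall j, j \in S -> j != k -> j != k' -> y j = R0) /\ y k <> R0].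

Lemma zero_circuit_ext m (M1 M2 : ('I_m -> R) -> Prop) S :
  (forall y, M1 y <-> M2 y) -> zero_circuit M1 S -> zero_circuit M2 S.
Proof.
move=> eqM [S_n0 forced free]; split=> // [k y kS /eqM | k k' kS k'S kNk'].
  exact: forced.
by have [y /eqM] := free k k' kS k'S kNk'; exists y.
Qed.

Section MeasurementCircuits.
Variables (d : nat) (V : finType) (m : nat) (E : m.-tuple (V * V)).
Hypotheses (d_gt0 : 0 < d) (E_graph : ordered_graph E).

Lemma measurement_eq0 (p : V -> 'I_d -> R) k :
  measurement E p k = R0 <-> p (tnth E k).1 = p (tnth E k).2.
Proof. exact: sqdist_eq0. Qed.

Definition indicator_config (b : V -> bool) : V -> 'I_d -> R :=
  fun v _ => if b v then R1 else R0.

Lemma measurement_indicator_eq0 b k :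
  measurement E (indicator_config b) k = R0 <-> b (tnth E k).1 = b (tnth E k).2.
Proof.
rewrite measurement_eq0 /indicator_config; split=> [eq_ends | -> //].
have := congr1 (fun q => q (Ordinal d_gt0)) eq_ends.
by case: (b _); case: (b _) => //; lra.
Qed.

Lemma cycle_supported_zero_circuit S :
  cycle_supported E S -> zero_circuit (in_measurement_variety d E) S.
Proof.
move=> cS; split.
- case: (cS) => c [c_ge3 _ _ cover]; apply/set0Pn.
  case: c c_ge3 cover => // x c _ cover.
  have [|j jS _] := cover (last x c, x); last by exists j.
  by rewrite -/(cycle_edges _) cycle_edges_cons mem_rcons mem_head.
- move=> k _ kS [p <-] p_other; apply/measurement_eq0.
  by apply: (cycle_supported_const cS kS) => j jS jNk; apply/measurement_eq0/p_other.
- move=> k k' kS k'S kNk'.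
  have [b [b_other bk]] := cycle_supported_free E_graph cS kS k'S kNk'.
  exists (measurement E (indicator_config b)); first by exists (indicator_config b).
  split=> [j jS jNk jNk' | /measurement_indicator_eq0 /eqP]; last exact/negP.
  by apply/measurement_indicator_eq0 => //; apply: b_other.
Qed.

Lemma zero_circuit_cycle_supported S :
  zero_circuit (in_measurement_variety d E) S -> cycle_supported E S.
Proof.
case=> /set0Pn[k kS] forced free.
have [T TS [kT cT]] : exists2 T : {set 'I_m}, T \subset S & k \in T /\ cycle_supported E T.
  apply: forced_edge_on_cycle => // b b_other.
  apply/measurement_indicator_eq0.
  apply: forced (kS) _ _ => [|j jS jNk]; first by exists (indicator_config b).
  exact/measurement_indicator_eq0/b_other.
suff -> : S = T by [].
apply/eqP; rewrite eqEsubset TS andbT; apply/subsetP => k' k'S.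
apply/negPn/negP => k'NT.
have kNk' : k != k' by apply: contraNneq k'NT => <-.
have [_ [p <-] [p_other pk]] := free k k' kS k'S kNk'.
apply/pk/measurement_eq0/(cycle_supported_const cT kT) => j jT jNk.
apply/measurement_eq0/p_other; [exact: (subsetP TS) | by [] |].
by apply: contraNneq k'NT => <-.
Qed.

End MeasurementCircuits.

Theorem mainTheorem16 (d : nat) (V W : finType) (m : nat)
  (G : m.-tuple (V * V)) (H : m.-tuple (W * W)) :
  1 <= d ->
  ordered_graph G -> ordered_graph H ->
  (forall x : 'I_m -> R,
     in_measurement_variety d G x <-> in_measurement_variety d H x) ->
  index_cycle_isomorphism G H.
Proof.
move=> d_gt0 G_graph H_graph sameM S.
have sameM' x : in_measurement_variety d H x <-> in_measurement_variety d G x.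
  by rewrite sameM.
split=> [/(cycle_supported_zero_circuit d_gt0 G_graph)
        | /(cycle_supported_zero_circuit d_gt0 H_graph)].
  by move/(zero_circuit_ext sameM)/(zero_circuit_cycle_supported d_gt0 H_graph).
by move/(zero_circuit_ext sameM')/(zero_circuit_cycle_supported d_gt0 G_graph).
Qed.
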